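(* Let $R$ be a finite principal left ideal ring, $<$ a respectful order on $R$, $B$ an ordered basis of $R^n$, and $P$ a left multiplicative property on $R^n$ with $P[0]$ true. Then the lexicode $C(<,B,P)$ is maximal with respect to inclusion among all left submodules $C\subseteq R^n$ such that $P[x]$ holds for all $x\in C$; i.e., there is no left submodule $C$ with $C(<,B,P)\subsetneq C\subseteq R^n$ all of whose elements satisfy $P$.
   Context: $R^\ast$ is the unit group of $R$. A property $P:R^n\to\{\text{true},\text{false}\}$ is left multiplicative if $P[ux]=P[x]$ for all $u\in R^\ast$, $x\in R^n$. A total order $<$ on $R$ is respectful if for all nonzero $x,y\in R$ with $Rx\supsetneq Ry$ there is $\alpha\in R^\ast$ with $\alpha x<uy$ for all $u\in R^\ast$. Fix an ordered basis $B=(b_1,\dots,b_n)$ of the free left module $R^n$; put $V_0=\{0\}$ and $V_i=Rb_1+\dots+Rb_i$. The lexicographic order on $R^n$: if $x\in V_{i-1}$ and $y\in V_i\setminus V_{i-1}$ then $x<y$; if $x\ne y$ both lie in $V_i\setminus V_{i-1}$, write $x=\sum_{j\le i}x_jb_j$, $y=\sum_{j\le i}y_jb_j$, let $k$ be the largest index with $x_k\ne y_k$, and set $x<y$ iff $x_k<y_k$ in $R$. Fix a set $\Gamma\subseteq R$ containing one generator of each nonzero left ideal of $R$. Greedy algorithm: $C_0=\{0\}$; for $i=1,\dots,n$, let $a_i$ be the smallest vector of $V_i\setminus V_{i-1}$ (if any) such that $P[\gamma a_i+c]$ is true for all $\gamma\in\Gamma$ and all $c\in C_{i-1}$; if such $a_i$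 exists set $C_i=Ra_i+C_{i-1}$, otherwise $C_i=C_{i-1}$. The lexicode is $C(<,B,P):=C_n$. *)

From HB Require Import structures.
From mathcomp Require Import all_boot all_order all_algebra.
Set Implicit Arguments. Unset Strict Implicit. Unset Printing Implicit Defensive.
Import GRing.Theory.
Local Open Scope ring_scope.

Section Lexicodes.
Variable R : finUnitRingType.

Definition left_ideal (I : {set R}) : Prop :=
  [/\ 0 \in I, {in I &, forall x y, x - y \in I} & forall r, {in I, forall x, r * x \in I}].

Definition lprincipal (x : R) : {set R} := [set r * x | r : R].

Definition principal_left_ideal_ring : Prop :=
  forall I : {set R}, left_ideal I -> exists g : R, I = lprincipal g.

Definition strict_total_order (lt : rel R) : Prop :=
  [/\ forall x, ~~ lt x x,
      forall x y z, lt x y -> lt y z -> lt x z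
    & forall x y, x != y -> lt x y || lt y x].

Definition respectful (lt : rel R) : Prop :=
  forall x y : R, x != 0 -> y != 0 ->
    lprincipal y \proper lprincipal x ->
    exists2 alpha, alpha \is a GRing.unit &
      forall u, u \is a GRing.unit -> lt (alpha * x) (u * y).

Definition generator_set (Gamma : {set R}) : Prop :=
  (forall g, g \in Gamma -> lprincipal g != [set 0]) /\
  (forall I : {set R}, left_ideal I -> I != [set 0] ->
     exists! g, g \in Gamma /\ I = lprincipal g).

Variable n : nat.
Notation vec := 'rV[R]_n.

Definition left_multiplicative (P : pred vec) : Prop :=
  forall (u : R) (x : vec), u \is a GRing.unit -> P (u *: x) = P x.

Definition left_submodule (C : {set vec}) : Prop :=
  [/\ 0 \in C, {in C &, forall x y, x + y \in C} & forall r : R, {in C, forall x, r *: x \in C}].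

Definition is_basis (B : 'I_n -> vec) : Prop :=
  forall x : vec, exists! c : vec, x = \sum_(j < n) c 0 j *: B j.

Variable B : 'I_n -> vec.

(* V_i = R b_0 + ... + R b_{i-1} (0-based indices) *)
Definition inV (i : nat) (x : vec) : bool :=
  [exists c : vec, x == \sum_(j < n | (j < i)%N) c 0 j *: B j].

(* the (unique, when B is a basis) coordinates of x in B *)
Definition coord (x : vec) : vec :=
  odflt 0 [pick c : vec | x == \sum_(j < n) c 0 j *: B j].

Variable lt : rel R.

Definition lexlt (x y : vec) : bool :=
  [exists i : 'I_n.+1, (0 < i)%N && inV i.-1 x && inV i y && ~~ inV i.-1 y]
  || ([exists i : 'I_n.+1, [&& (0 < i)%N, inV i x, ~~ inV i.-1 x, inV i y & ~~ inV i.-1 y]]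
      && [exists k : 'I_n, [&& coord x 0 k != coord y 0 k,
                               [forall j : 'I_n, (k < j)%N ==> (coord x 0 j == coord y 0 j)]
                             & lt (coord x 0 k) (coord y 0 k)]]).

Variables (P : pred vec) (Gamma : {set R}).

(* admissible candidates at step i (1-based) given C_{i-1} *)
Definition candidate (i : nat) (C : {set vec}) (a : vec) : bool :=
  [&& inV i a, ~~ inV i.-1 a &
      [forall g in Gamma, [forall c in C, P (g *: a + c)]]].

Definition smallest_candidate (i : nat) (C : {set vec}) : option vec :=
  [pick a | candidate i C a &&
            [forall b, candidate i C b ==> (b == a) || lexlt a b]].

Fixpoint greedy (i : nat) : {set vec} :=
  match i with
  | 0 => [set 0]
  | i'.+1 =>
      let C := greedy i' in
      match smallest_candidate i C with
      | Some a => [set r *: a + c | r in [set: R], c in C]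
      | None => C
      end
  end.

Definition lexicode : {set vec} := greedy n.

End Lexicodes.

From Pilot Require Import Defs.
From HB Require Import structures.
From mathcomp Require Import all_boot all_order all_algebra.
Set Implicit Arguments. Unset Strict Implicit. Unset Printing Implicit Defensive.
Import GRing.Theory.
Local Open Scope ring_scope.

(* Let C be a submodule containing the lexicode all of whose elements satisfy
   P, and write C_i for the greedy codes. We show C ∩ V_i ⊆ C_i by induction on
   i. Since C_(i-1) ⊆ C, every element of C with leading index i is a candidate
   at step i, so a smallest candidate a_i exists, and it lies in C. The leading
   coefficients of C ∩ V_i form a left ideal R g; were R (a_i)_i strictly
   smaller, respectfulness would give a unit β with β g < (a_i)_i, and β times
   a preimage of g would be a candidate lexicographically below a_i. Hence the
   leading coefficient of y ∈ C ∩ V_i is r (a_i)_i for some r, and then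
   y - r a_i ∈ C ∩ V_(i-1) ⊆ C_(i-1), so y ∈ C_i. *)

Lemma exists_rel_minimum (T : finType) (r : rel T) (A : pred T) x0 :
  A x0 -> (forall x, ~~ r x x) -> (forall x y z, r x y -> r y z -> r x z) ->
  (forall x y, A x -> A y -> x != y -> r x y || r y x) ->
  exists2 a, A a & forall b, A b -> (b == a) || r a b.
Proof.
move=> Ax0 irr tr tot.
case: (arg_minnP (fun a => #|[pred c | A c && r c a]|) Ax0) => a Aa amin.
exists a => // b Ab; case: (eqVneq b a) => //= nba.
case/orP: (tot b a Ab Aa nba) => // rba; exfalso.
have := amin b Ab; rewrite leqNgt => /negP; apply; apply: proper_card.
apply/properP; split.
  apply/subsetP => c; rewrite !inE => /andP[Ac rcb]; rewrite Ac /=.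
  exact: tr rcb rba.
by exists b; rewrite !inE ?Ab ?rba ?(negbTE (irr b)).
Qed.

Section Coordinates.
Variables (R : finUnitRingType) (n : nat) (B : 'I_n -> 'rV[R]_n).
Hypothesis hB : is_basis B.

Lemma coord_sum x : x = \sum_(j < n) Defs.coord B x 0 j *: B j.
Proof.
rewrite /Defs.coord; case: pickP => [c /eqP //|none].
by have [c [hc _]] := hB x; move: (none c); rewrite hc eqxx.
Qed.

Lemma coord_unique x (c : 'rV[R]_n) :
  x = \sum_(j < n) c 0 j *: B j -> Defs.coord B x = c.
Proof. by move=> hc; have [c0 [_ u]] := hB x; rewrite -(u _ hc) (u _ (coord_sum x)). Qed.

Lemma coord_inj : injective (Defs.coord B).
Proof. by move=> x y e; rewrite (coord_sum x) (coord_sum y) e. Qed.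

Lemma coordD x y : Defs.coord B (x + y) = Defs.coord B x + Defs.coord B y.
Proof.
apply: coord_unique; rewrite {1}(coord_sum x) {1}(coord_sum y) -big_split /=.
by apply: eq_bigr => j _; rewrite mxE scalerDl.
Qed.

Lemma coordZ r x : Defs.coord B (r *: x) = r *: Defs.coord B x.
Proof.
apply: coord_unique; rewrite {1}(coord_sum x) scaler_sumr.
by apply: eq_bigr => j _; rewrite mxE scalerA.
Qed.

Lemma coord0 : Defs.coord B 0 = 0.
Proof. by apply: coord_unique; rewrite big1 // => j _; rewrite mxE scale0r. Qed.

Lemma coordB x y : Defs.coord B (x - y) = Defs.coord B x - Defs.coord B y.
Proof. by rewrite coordD -scaleN1r coordZ scaleN1r. Qed.

Lemma inVP i x :
  reflect (forall j : 'I_n, (i <= j)%N -> Defs.coord B x 0 j = 0) (inV B i x).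
Proof.
apply: (iffP existsP) => [[c /eqP hx] j hj|h].
  pose c' := \row_(j < n) (if (j < i)%N then c 0 j else 0).
  have -> : Defs.coord B x = c'.
    apply: coord_unique; rewrite hx big_mkcond /=.
    by apply: eq_bigr => k _; rewrite mxE; case: ifP => // _; rewrite scale0r.
  by rewrite mxE ltnNge hj.
exists (Defs.coord B x); apply/eqP; rewrite {1}(coord_sum x) [RHS]big_mkcond /=.
apply: eq_bigr => k _; case: ifP => // /negbT; rewrite -leqNgt => hk.
by rewrite h // scale0r.
Qed.

Lemma inV_mono i j x : (i <= j)%N -> inV B i x -> inV B j x.
Proof. by move=> hij /inVP h; apply/inVP => k hk; apply/h/(leq_trans hij). Qed.

Lemma inV_total x : inV B n x.
Proof. by apply/inVP => j; rewrite leqNgt ltn_ord. Qed.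

Lemma inV_0_eq0 x : inV B 0 x -> x = 0.
Proof. by move/inVP=> h; rewrite (coord_sum x) big1 // => j _; rewrite h // scale0r. Qed.

Lemma inV0 i : inV B i 0.
Proof. by apply/inVP => j _; rewrite coord0 mxE. Qed.

Lemma inVB i x y : inV B i x -> inV B i y -> inV B i (x - y).
Proof. by move=> /inVP hx /inVP hy; apply/inVP => j hj; rewrite coordB !mxE hx ?hy ?subr0. Qed.

Lemma inVZ i r x : inV B i x -> inV B i (r *: x).
Proof. by move=> /inVP hx; apply/inVP => j hj; rewrite coordZ mxE hx ?mulr0. Qed.

Lemma inV_lead (k : 'I_n) x :
  inV B k.+1 x -> inV B k x = (Defs.coord B x 0 k == 0).
Proof.
move/inVP=> hx; apply/inVP/eqP => [|hk j]; first by apply.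
by rewrite leq_eqVlt => /orP[/eqP/val_inj <- //|]; apply: hx.
Qed.

End Coordinates.

Section RowLex.
Variables (R : finUnitRingType) (n : nat) (lt : rel R).
Hypothesis hlt : strict_total_order lt.

Definition rowlex (u v : 'rV[R]_n) : bool :=
  [exists k : 'I_n, [&& u 0 k != v 0 k,
     [forall j : 'I_n, (k < j)%N ==> (u 0 j == v 0 j)] & lt (u 0 k) (v 0 k)]].

Lemma lt_neq x y : lt x y -> x != y.
Proof. by case: hlt => irr _ _; apply: contraTneq => ->; apply: irr. Qed.

Lemma rowlex_irr u : ~~ rowlex u u.
Proof. by apply/existsP => -[k /and3P[]]; rewrite eqxx. Qed.

Lemma rowlex_trans u v w : rowlex u v -> rowlex v w -> rowlex u w.
Proof.
case: hlt => _ tr _.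
move=> /existsP[k1 /and3P[_ /forallP e1 l1]] /existsP[k2 /and3P[_ /forallP e2 l2]].
have eq_above (k j : 'I_n) : (k1 <= k)%N -> (k2 <= k)%N -> (k < j)%N -> u 0 j = w 0 j.
  move=> h1 h2 hj; have /implyP/(_ (leq_ltn_trans h1 hj))/eqP -> := e1 j.
  by have /implyP/(_ (leq_ltn_trans h2 hj))/eqP := e2 j.
have rowlex_at (k : 'I_n) : (k1 <= k)%N -> (k2 <= k)%N -> lt (u 0 k) (w 0 k) -> rowlex u w.
  move=> h1 h2 l; apply/existsP; exists k; rewrite l (lt_neq l) andbT /=.
  by apply/forallP => j; apply/implyP => hj; rewrite (eq_above k).
case: (ltngtP k1 k2) => [h12|h21|/val_inj e].
- apply: (rowlex_at k2 (ltnW h12) (leqnn _)).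
  by have /implyP/(_ h12)/eqP -> := e1 k2.
- apply: (rowlex_at k1 (leqnn _) (ltnW h21)).
  by have /implyP/(_ h21)/eqP <- := e2 k1.
- by subst k2; apply: (rowlex_at k1) => //; apply: tr l1 l2.
Qed.

Lemma rowlex_total u v : u != v -> rowlex u v || rowlex v u.
Proof.
case: hlt => _ _ tot huv.
have [k0 hk0] : exists k, u 0 k != v 0 k.
  apply/existsP; apply: contraR huv => /existsPn h; apply/eqP/matrixP => i j.
  by rewrite ord1; apply/eqP; move: (h j); rewrite negbK.
have [k hk kmax] := @arg_maxnP _ k0 (fun k => u 0 k != v 0 k) val hk0.
have above (j : 'I_n) : (k < j)%N -> u 0 j = v 0 j.
  by move=> hj; apply/eqP; apply: contraTT hj => /kmax; rewrite -leqNgt.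
case/orP: (tot _ _ hk) => h; apply/orP; [left|right]; apply/existsP; exists k.
  by rewrite hk h andbT /=; apply/forallP => j; apply/implyP => /above ->.
by rewrite eq_sym hk h andbT /=; apply/forallP => j; apply/implyP => /above ->.
Qed.

Lemma rowlex_lead (k : 'I_n) (u v : 'rV[R]_n) :
  (forall j : 'I_n, (k < j)%N -> u 0 j = 0) ->
  (forall j : 'I_n, (k < j)%N -> v 0 j = 0) ->
  rowlex u v -> ~~ lt (v 0 k) (u 0 k).
Proof.
case: hlt => irr tr _ u0 v0 /existsP[k' /and3P[ne /forallP eq l]].
apply/negP => l'; case: (ltngtP k' k) => [h|h|/val_inj e].
- by have /implyP/(_ h)/eqP e := eq k; move: l'; rewrite e (negbTE (irr _)).
- by move: ne; rewrite u0 // v0 // eqxx.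
- by subst k'; move: (tr _ _ _ l l'); rewrite (negbTE (irr _)).
Qed.

End RowLex.

Section Candidates.
Variables (R : finUnitRingType) (n : nat) (B : 'I_n -> 'rV[R]_n)
  (lt : rel R) (P : pred 'rV[R]_n) (Gamma : {set R}).
Hypotheses (hB : is_basis B) (hlt : strict_total_order lt).

Lemma lexlt_layer (k : 'I_n) a b :
  inV B k.+1 a -> ~~ inV B k a -> inV B k.+1 b -> ~~ inV B k b ->
  lexlt B lt a b = rowlex lt (Defs.coord B a) (Defs.coord B b).
Proof.
move=> ha na hb nb; rewrite /lexlt.
have -> : [exists i : 'I_n.+1,
    (0 < i)%N && inV B i.-1 a && inV B i b && ~~ inV B i.-1 b] = false.
  apply/existsP => -[i /andP[/andP[/andP[_ ha'] _] nb']].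
  case: (leqP i.-1 k) => h; first by move: na; rewrite (inV_mono hB h ha').
  by move: nb'; rewrite (inV_mono hB h hb).
suff -> : [exists i : 'I_n.+1, [&& (0 < i)%N, inV B i a, ~~ inV B i.-1 a,
    inV B i b & ~~ inV B i.-1 b]] by [].
by apply/existsP; exists (Ordinal (ltn_ord k : (k.+1 < n.+1)%N)); rewrite /= ha na hb nb.
Qed.

Lemma candidate_layer i C a :
  candidate B P Gamma i.+1 C a -> inV B i.+1 a /\ ~~ inV B i a.
Proof. by case/and3P. Qed.

Lemma smallest_candidate_min i C a :
  smallest_candidate B lt P Gamma i C = Some a ->
  candidate B P Gamma i C a /\
  forall b, candidate B P Gamma i C b -> (b == a) || lexlt B lt a b.
Proof.
rewrite /smallest_candidate; case: pickP => // a' /andP[ca /forallP amin] [<-].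
by split => // b; apply/implyP/amin.
Qed.

Lemma smallest_candidate_exists (k : 'I_n) C y :
  candidate B P Gamma k.+1 C y ->
  exists a, smallest_candidate B lt P Gamma k.+1 C = Some a.
Proof.
move=> cy; rewrite /smallest_candidate; case: pickP => [a _|none]; first by exists a.
have [a ca amin] := @exists_rel_minimum _
  (fun a b => rowlex lt (Defs.coord B a) (Defs.coord B b))
  (candidate B P Gamma k.+1 C) y cy
  (fun x => rowlex_irr lt _) (fun x y z => @rowlex_trans _ _ _ hlt _ _ _)
  (fun x z _ _ nxz => rowlex_total hlt (contra_neq (@coord_inj _ _ _ hB x z) nxz)).
have := none a; rewrite ca /= => /forallP; case => b; apply/implyP => cb.
have [[ha nha] [hb nb]] := (candidate_layer ca, candidate_layer cb).
by rewrite (lexlt_layer ha nha hb nb); apply: amin.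
Qed.

Lemma greedy_sub_succ i : greedy B lt P Gamma i \subset greedy B lt P Gamma i.+1.
Proof.
apply/subsetP => c hc /=; case: (smallest_candidate _ _ _ _ _ _) => // a.
by apply/imset2P; exists 0 c; rewrite ?inE // scale0r add0r.
Qed.

Lemma greedy_sub_le i j :
  (i <= j)%N -> greedy B lt P Gamma i \subset greedy B lt P Gamma j.
Proof.
elim: j => [|j IH]; first by rewrite leqn0 => /eqP ->.
rewrite leq_eqVlt => /orP[/eqP -> //|h].
exact: subset_trans (IH h) (greedy_sub_succ j).
Qed.

Lemma mem0_greedy i : 0 \in greedy B lt P Gamma i.
Proof. by apply: (subsetP (greedy_sub_le (leq0n i))); rewrite inE. Qed.

Lemma mem_greedy_step i a r c :
  smallest_candidate B lt P Gamma i.+1 (greedy B lt P Gamma i) = Some a ->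
  c \in greedy B lt P Gamma i -> r *: a + c \in greedy B lt P Gamma i.+1.
Proof. by move=> sa cG; cbn [greedy]; rewrite sa; apply/imset2P; exists r c; rewrite ?inE. Qed.

End Candidates.

Lemma lprincipal_sub (R : finUnitRingType) (x g : R) :
  x \in lprincipal g -> lprincipal x \subset lprincipal g.
Proof.
case/imsetP => s _ ->; apply/subsetP => _ /imsetP[r _ ->].
by apply/imsetP; exists (r * s); rewrite ?mulrA.
Qed.

Lemma lprincipal_id (R : finUnitRingType) (g : R) : g \in lprincipal g.
Proof. by apply/imsetP; exists 1; rewrite ?mul1r. Qed.

Section Maximality.
Variables (R : finUnitRingType) (n : nat) (B : 'I_n -> 'rV[R]_n)
  (lt : rel R) (P : pred 'rV[R]_n) (Gamma : {set R}).
Hypotheses (hPLIR : principal_left_ideal_ring R) (hlt : strict_total_order lt)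
  (hresp : respectful lt) (hB : is_basis B).
Variable C : {set 'rV[R]_n}.
Hypotheses (hC : left_submodule C) (hPC : forall x, x \in C -> P x).

Lemma submoduleZ r : {in C, forall x, r *: x \in C}.
Proof. by case: hC. Qed.

Lemma submodule_subr : {in C &, forall x y, x - y \in C}.
Proof.
by case: hC => _ CD _ x y xC yC; rewrite -scaleN1r; apply: CD => //; apply: submoduleZ.
Qed.

Lemma candidate_of_submodule i (C' : {set 'rV[R]_n}) z :
  C' \subset C -> z \in C -> inV B i z -> ~~ inV B i.-1 z ->
  candidate B P Gamma i C' z.
Proof.
case: hC => _ CD _ sC' zC hz nz; rewrite /candidate hz nz /=.
apply/forall_inP => g _; apply/forall_inP => c cC'.
by apply: hPC; apply: CD; [apply: submoduleZ|apply: (subsetP sC')].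
Qed.

Definition lead_ideal (k : 'I_n) : {set R} :=
  [set Defs.coord B z 0 k | z in [pred z | (z \in C) && inV B k.+1 z]].

Lemma mem_lead_ideal (k : 'I_n) z :
  z \in C -> inV B k.+1 z -> Defs.coord B z 0 k \in lead_ideal k.
Proof. by move=> zC hz; apply/imsetP; exists z; rewrite // inE zC hz. Qed.

Lemma lead_ideal_left_ideal k : left_ideal (lead_ideal k).
Proof.
case: hC => C0 _ _; split.
- by have := mem_lead_ideal C0 (inV0 hB k.+1); rewrite (coord0 hB) mxE.
- move=> _ _ /imsetP[z1 /[!inE]/andP[z1C hz1] ->] /imsetP[z2 /[!inE]/andP[z2C hz2] ->].
  have := mem_lead_ideal (submodule_subr z1C z2C) (inVB hB hz1 hz2).
  by rewrite (coordB hB) !mxE.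
- move=> r _ /imsetP[z /[!inE]/andP[zC hz] ->].
  by have := mem_lead_ideal (submoduleZ r zC) (inVZ hB r hz); rewrite (coordZ hB) mxE.
Qed.

Lemma smallest_candidate_lead_min (k : 'I_n) (C' : {set 'rV[R]_n}) a z :
  C' \subset C -> smallest_candidate B lt P Gamma k.+1 C' = Some a ->
  z \in C -> inV B k.+1 z -> Defs.coord B z 0 k != 0 ->
  ~~ lt (Defs.coord B z 0 k) (Defs.coord B a 0 k).
Proof.
move=> sC' /smallest_candidate_min[ca amin] zC hz zk.
have [ha nha] := candidate_layer ca.
have nz : ~~ inV B k z by rewrite (inV_lead hB hz).
have /orP[/eqP -> | ] := amin z (candidate_of_submodule sC' zC hz nz).
  by case: hlt => irr _ _; apply: irr.
rewrite (lexlt_layer lt hB ha nha hz nz).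
by apply: rowlex_lead => //; apply/(inVP hB).
Qed.

Lemma lead_ideal_sub (k : 'I_n) (C' : {set 'rV[R]_n}) a :
  C' \subset C -> smallest_candidate B lt P Gamma k.+1 C' = Some a -> a \in C ->
  lead_ideal k \subset lprincipal (Defs.coord B a 0 k).
Proof.
move=> sC' sa aC; have [ha nha] := candidate_layer (smallest_candidate_min sa).1.
have ak0 : Defs.coord B a 0 k != 0 by rewrite -(inV_lead hB ha).
have [g Ig] := hPLIR (lead_ideal_left_ideal k).
have ag : Defs.coord B a 0 k \in lprincipal g by rewrite -Ig mem_lead_ideal.
rewrite Ig; apply: contraT => nsub.
have pr : lprincipal (Defs.coord B a 0 k) \proper lprincipal g.
  by rewrite properEneq lprincipal_sub // andbT; apply: contraNneq nsub => ->.
have g0 : g != 0.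
  by apply: contraNneq ak0 => g0; move: ag; rewrite g0 => /imsetP[r _ ->]; rewrite mulr0.
have [beta ubeta lt_beta] := hresp g0 ak0 pr.
move: (lprincipal_id g); rewrite -Ig => /imsetP[z /[!inE]/andP[zC hz] gz].
have bz : Defs.coord B (beta *: z) 0 k = beta * g by rewrite (coordZ hB) mxE gz.
have := smallest_candidate_lead_min sC' sa (submoduleZ beta zC) (inVZ hB beta hz).
rewrite bz -[X in lt _ X]mul1r lt_beta ?unitr1 //.
by apply; apply: contraNneq g0 => bg0; rewrite -(mulKr ubeta g) bg0 mulr0.
Qed.

Hypothesis hsub : greedy B lt P Gamma n \subset C.

Lemma greedy_subC i : (i <= n)%N -> greedy B lt P Gamma i \subset C.
Proof. by move/greedy_sub_le/subset_trans; apply. Qed.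

Lemma submodule_inV_greedy i y :
  (i <= n)%N -> y \in C -> inV B i y -> y \in greedy B lt P Gamma i.
Proof.
elim: i y => [|i IH] y hi yC hy; first by rewrite (inV_0_eq0 hB hy) inE.
pose k := Ordinal hi.
have Gi := greedy_subC (ltnW hi).
have [hyi|nyi] := boolP (inV B k y).
  exact: (subsetP (greedy_sub_succ B lt P Gamma i)) (IH y (ltnW hi) yC hyi).
have [a sa] := smallest_candidate_exists hB hlt (k := k) (candidate_of_submodule Gi yC hy nyi).
have aC : a \in C.
  apply: (subsetP (greedy_subC hi)); rewrite -[a]addr0 -[a]scale1r.
  exact: (mem_greedy_step 1 sa (mem0_greedy B lt P Gamma i)).
have [ha _] := candidate_layer (smallest_candidate_min sa).1.
have /imsetP[r _ yr] : Defs.coord B y 0 k \in lprincipal (Defs.coord B a 0 k).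
  exact: (subsetP (lead_ideal_sub (k := k) Gi sa aC)) _ (mem_lead_ideal (k := k) yC hy).
have ya_lower : inV B k (y - r *: a).
  by rewrite (inV_lead hB) ?inVB ?inVZ // (coordB hB) (coordZ hB) !mxE yr subrr.
have zG := IH _ (ltnW hi) (submodule_subr yC (submoduleZ r aC)) ya_lower.
by rewrite -(subrK (r *: a) y) addrC; exact: (mem_greedy_step (i := i) r sa).
Qed.

End Maximality.

Theorem mainTheorem8 (R : finUnitRingType) (n : nat) (lt : rel R)
  (B : 'I_n -> 'rV[R]_n) (P : pred 'rV[R]_n) (Gamma : {set R}) :
  principal_left_ideal_ring R ->
  strict_total_order lt ->
  respectful lt ->
  is_basis B ->
  left_multiplicative P ->
  P 0 ->
  generator_set Gamma ->
  forall C : {set 'rV[R]_n},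
    left_submodule C ->
    lexicode B lt P Gamma \subset C ->
    (forall x, x \in C -> P x) ->
    C = lexicode B lt P Gamma.
Proof.
move=> hPLIR hlt hresp hB _ _ _ C hC hsub hPC.
apply/eqP; rewrite eqEsubset hsub andbT; apply/subsetP => y yC.
exact: (submodule_inV_greedy hPLIR hlt hresp hB hC hPC hsub (leqnn n) yC (inV_total hB y)).
Qed.
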